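(* Let $R$ be a ring, $\mathbf{M}$ a class of left $R$-modules, and $\kappa$ an infinite regular cardinal such that $\mathbf{M}$ is closed under isomorphism and under $\kappa$-restricted direct products $\prod^\kappa_{i\in I}M_i$ (for any index set $I$ and any $M_i\in\mathbf{M}$). Let $0\to A\to M\to N$ be an exact sequence of left $R$-modules with $M,N\in\mathbf{M}$. Then $A$ is isomorphic to the inverse limit of an inverse system (over an upward directed index set) of modules in $\mathbf{M}$ with one-to-one connecting homomorphisms.
   Context: $\prod^\kappa_{i\in I}M_i=\{x\in\prod_{i\in I}M_i \mid |\{i: x_i\neq0\}|<\kappa\}$. Rings are associative with unit, modules are unital. *)

From HB Require Import structures.
From mathcomp Require Import all_boot all_order all_algebra.
Set Implicit Arguments. Unset Strict Implicit. Unset Printing Implicit Defensive.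
Import GRing.Theory.
Local Open Scope ring_scope.

Definition lin (R : pzRingType) (U V : lmodType R) (f : U -> V) : Prop :=
  forall (a : R) (u v : U), f (a *: u + v) = a *: f u + f v.

Definition lin_prod (R : pzRingType) (U : lmodType R) (I : Type)
  (Mi : I -> lmodType R) (f : U -> forall i, Mi i) : Prop :=
  forall i, lin (fun u => f u i).

Definition mod_iso (R : pzRingType) (U V : lmodType R) : Prop :=
  exists f : U -> V, lin f /\ bijective f.

(* Cardinals are represented by types: |X| < |K| *)
Definition card_lt (X K : Type) : Prop :=
  (exists f : X -> K, injective f) /\ ~ (exists g : K -> X, injective g).

Definition small (K T : Type) (S : T -> Prop) : Prop := card_lt {x | S x} K.

Definition infinite_regular (K : Type) : Prop :=
  (exists f : nat -> K, injective f) /\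
  forall (X T : Type) (S : X -> T -> Prop),
    card_lt X K -> (forall x, small K (S x)) ->
    small K (fun t => exists x, S x t).

Definition modclass (R : pzRingType) := lmodType R -> Prop.

Definition iso_closed (R : pzRingType) (C : modclass R) : Prop :=
  forall U V : lmodType R, C U -> mod_iso U V -> C V.

(* P is isomorphic (via f) to the kappa-restricted product of the Mi, i.e.
   f is a linear embedding into prod_i Mi whose image is exactly the set of
   families with fewer than kappa nonzero coordinates *)
Definition is_restricted_product (R : pzRingType) (K I : Type)
  (Mi : I -> lmodType R) (P : lmodType R) (f : P -> forall i, Mi i) : Prop :=
  lin_prod f /\ injective f /\
  forall x : (forall i, Mi i), (exists p, f p = x) <-> small K (fun i => x i <> 0).

Definition closed_restricted_products (R : pzRingType) (C : modclass R)
  (K : Type) : Prop :=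
  forall (I : Type) (Mi : I -> lmodType R) (P : lmodType R)
         (f : P -> forall i, Mi i),
    (forall i, C (Mi i)) -> is_restricted_product K f -> C P.

Definition directed_poset (J : Type) (le : J -> J -> Prop) : Prop :=
  inhabited J /\
  (forall j, le j j) /\
  (forall i j k, le i j -> le j k -> le i k) /\
  (forall i j, le i j -> le j i -> i = j) /\
  (forall i j, exists k, le i k /\ le j k).

Definition inverse_system (R : pzRingType) (J : Type) (le : J -> J -> Prop)
  (N : J -> lmodType R) (phi : forall j k, le j k -> N k -> N j) : Prop :=
  (forall j k (h : le j k), lin (phi j k h)) /\
  (forall j (h : le j j) (x : N j), phi j j h x = x) /\
  (forall i j k (h1 : le i j) (h2 : le j k) (h3 : le i k) (x : N k),
      phi i j h1 (phi j k h2 x) = phi i k h3 x).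

(* A is isomorphic (via g) to the inverse limit of the system: g is a linear
   embedding into prod_j N_j whose image is exactly the compatible families *)
Definition is_inverse_limit (R : pzRingType) (J : Type) (le : J -> J -> Prop)
  (N : J -> lmodType R) (phi : forall j k, le j k -> N k -> N j)
  (A : lmodType R) (g : A -> forall j, N j) : Prop :=
  lin_prod g /\ injective g /\
  forall x : (forall j, N j),
    (exists a, g a = x) <-> (forall j k (h : le j k), phi j k h (x k) = x j).

From HB Require Import structures.
From mathcomp Require Import all_boot all_order all_algebra.
From mathcomp Require Import boolp functions.
Import GRing.Theory.
Local Open Scope ring_scope.
Set Implicit Arguments. Unset Strict Implicit.

(* Index set: the subsets T of K with |T| < kappa, ordered by inclusion; unions
   make it directed.  The layer over T is
     N_T = { (m, f) in M x N^K | f = 0 on T, f has < kappa nonzero values },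
   the kappa-restricted product of M and of one copy of N for each k outside T,
   so N_T lies in C.
   For T inside T' the bond N_T' -> N_T is (m, f) |-> (m, f + beta m 1_(T'\T)):
   it is linear, injective and the bonds compose.  A maps to the system by
   a |-> (alpha a, 0).  In a compatible family (m, f_T)_T all first components
   agree; reading it through the layers over singletons {k} shows that
   f_empty(k) = beta m for every k, so beta m = 0 as f_empty has small support;
   comparing with the layers T + {k} then gives f_T = 0, and exactness yields
   a in A with alpha a = m. *)


Lemma sval_inj (T : Type) (P : T -> Prop) (s1 s2 : {x | P x}) :
  sval s1 = sval s2 -> s1 = s2.
Proof. by case: s1 s2 => [x1 h1] [x2 h2] /= E; apply: eq_exist. Qed.

Lemma add_fun_apply (I : Type) (V : nmodType) (f g : I -> V) (i : I) :
  (f + g) i = f i + g i.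
Proof. by []. Qed.

Lemma scale_fun_apply (R : pzRingType) (I : Type) (V : lmodType R) (a : R) (f : I -> V) (i : I) :
  (a *: f) i = a *: f i.
Proof. by []. Qed.

Section SmallSets.
Variable K : Type.
Hypothesis hK : infinite_regular K.

Lemma card_lt_inj (X X' : Type) (f : X' -> X) :
  injective f -> card_lt X K -> card_lt X' K.
Proof.
move=> f_inj [[h h_inj] no_inj]; split; first by exists (h \o f) => x y /h_inj /f_inj.
by case=> g g_inj; apply: no_inj; exists (f \o g) => x y /f_inj /g_inj.
Qed.

Lemma small_inj_on (T1 T2 : Type) (h : T1 -> T2) (S1 : T1 -> Prop) (S2 : T2 -> Prop) :
  (forall t, S1 t -> S2 (h t)) ->
  (forall a b, S1 a -> S1 b -> h a = h b -> a = b) -> small K S2 -> small K S1.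
Proof.
move=> hS h_inj.
apply: (@card_lt_inj _ _ (fun s : {t | S1 t} => exist S2 (h (sval s)) (hS _ (svalP s)))).
by move=> [a ha] [b hb] /(congr1 sval) /= E; apply: sval_inj; apply: h_inj.
Qed.

Lemma small_sub (T : Type) (S1 S2 : T -> Prop) :
  (forall t, S1 t -> S2 t) -> small K S2 -> small K S1.
Proof. by move=> sub; apply: (small_inj_on (h := id)). Qed.

(* Since kappa is infinite, a two-element set has cardinality below kappa. *)
Lemma card_lt_bool : card_lt bool K.
Proof.
case: hK => [[f f_inj] _]; split.
  by exists (fun b => f (if b then 0%N else 1%N)) => [[] []] // /f_inj.
case=> g g_inj.
have g01 : g (f 0%N) <> g (f 1%N) by move=> /g_inj /f_inj.
have g02 : g (f 0%N) <> g (f 2%N) by move=> /g_inj /f_inj.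
have g12 : g (f 1%N) <> g (f 2%N) by move=> /g_inj /f_inj.
by move: g01 g02 g12; case: (g (f 0%N)); case: (g (f 1%N)); case: (g (f 2%N)).
Qed.

Lemma small_subsingleton (T : Type) (S : T -> Prop) :
  (forall s1 s2 : {t | S t}, s1 = s2) -> small K S.
Proof.
move=> S_sub1; apply: (@card_lt_inj _ _ (fun _ : {t | S t} => true)); last exact: card_lt_bool.
by move=> x y _; apply: S_sub1.
Qed.

Lemma small0 (T : Type) : small K (fun _ : T => False).
Proof. by apply: small_subsingleton => -[]. Qed.

Lemma small1 (T : Type) (t0 : T) : small K (fun t => t = t0).
Proof. by apply: small_subsingleton => s1 s2; apply: sval_inj; rewrite (svalP s1) (svalP s2). Qed.

(* Regularity, applied to a two-set family: binary unions of small sets are small. *)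
Lemma smallU (T : Type) (S1 S2 : T -> Prop) :
  small K S1 -> small K S2 -> small K (fun t => S1 t \/ S2 t).
Proof.
move=> S1_small S2_small.
have := hK.2 bool T (fun b t => if b then S1 t else S2 t) card_lt_bool.
case/(_ _)/Wrap => [[]//|union_small].
by apply: small_sub union_small => t [] St; [exists true | exists false].
Qed.

Lemma small_option (T : Type) (t0 : T) (S : T -> Prop) :
  small K S -> small K (fun o : option T => if o is Some t then S t else True).
Proof.
move=> S_small.
apply: (@small_sub _ _ (fun o => o = None \/ exists t, o = Some t /\ S t)).
  by move=> [t|] St; [right; exists t | left].
apply: smallU (small1 None) _.
apply: (small_inj_on (h := odflt t0)) S_small; first by move=> o [t [-> St]].
by move=> a b [ta [-> _]] [tb [-> _]] /= ->.
Qed.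

Lemma full_not_small (S : K -> Prop) : (forall k, S k) -> ~ small K S.
Proof.
move=> S_full [_ no_inj]; apply: no_inj; exists (fun k => exist S k (S_full k)).
by move=> x y /(congr1 sval).
Qed.

End SmallSets.

Section Layers.
Variables (R : pzRingType) (K : Type) (M N : lmodType R).

Definition layer_carrier := (M * (K -> N))%type.

(* The layer over T: the family vanishes on T and has fewer than kappa
   nonzero values; it is a model of M x prod^kappa_{k notin T} N. *)
Definition supported_off (T : K -> Prop) (p : layer_carrier) : Prop :=
  (forall k, T k -> p.2 k = 0) /\ small K (fun k => p.2 k <> 0).

(* The argument hK is recorded so that the submodule structure, whose
   closure proof needs it, can be inferred from the predicate. *)
Definition layer_pred (hK : infinite_regular K) (T : K -> Prop) : {pred layer_carrier} :=
  fun p => `[< supported_off T p >].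

Lemma layer_predP {hK T} p : (p \in layer_pred hK T) <-> supported_off T p.
Proof. by rewrite unfold_in; split => /asboolP. Qed.

Lemma layer_closed hK T : subsemimod_closed (layer_pred hK T).
Proof.
split; first split.
- by apply/layer_predP; split=> //; apply: small_sub (small0 hK K) => k /=; apply.
- move=> u v /layer_predP [u_off u_small] /layer_predP [v_off v_small]; apply/layer_predP.
  split=> [k Tk|]; first by rewrite /= add_fun_apply u_off // v_off // addr0.
  apply: small_sub (smallU hK u_small v_small) => k /= uv_nz.
  case: (pselect (u.2 k = 0)) => [u0|]; last by left.
  by right => v0; apply: uv_nz; rewrite add_fun_apply u0 v0 addr0.
- move=> a u /layer_predP [u_off u_small]; apply/layer_predP.
  split=> [k Tk|]; first by rewrite /= scale_fun_apply u_off // scaler0.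
  by apply: small_sub u_small => k /= au_nz u0; apply: au_nz; rewrite scale_fun_apply u0 scaler0.
Qed.

HB.instance Definition _ hK T :=
  GRing.isSubmodClosed.Build R layer_carrier (layer_pred hK T) (layer_closed hK T).

Definition layer hK T := {p : layer_carrier | p \in layer_pred hK T}.
HB.instance Definition _ hK T :=
  [isSub for (@sval layer_carrier (fun p => p \in layer_pred hK T)) : layer hK T -> _].
HB.instance Definition _ hK T := [Choice of layer hK T by <:].
HB.instance Definition _ hK T := [SubChoice_isSubLmodule of layer hK T by <:].

Lemma layer_off hK T (x : layer hK T) : supported_off T (val x).
Proof. exact/layer_predP/(valP x). Qed.

End Layers.

Definition small_subset (K : Type) := {T : K -> Prop | small K T}.

Definition subset_le (K : Type) (j k : small_subset K) : Prop :=
  forall t, sval j t -> sval k t.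

Section SmallSubsets.
Variable K : Type.
Hypothesis hK : infinite_regular K.

Definition empty_subset : small_subset K := exist _ (fun _ => False) (small0 hK K).

Definition subsetU (j k : small_subset K) : small_subset K :=
  exist _ (fun t => sval j t \/ sval k t) (smallU hK (svalP j) (svalP k)).

Definition singleton_subset (k : K) : small_subset K := exist _ (fun t => t = k) (small1 hK k).

Lemma empty_subset_le (j : small_subset K) : subset_le empty_subset j.
Proof. by move=> t []. Qed.

Lemma small_subsets_directed : directed_poset (@subset_le K).
Proof.
split; first exact: inhabits empty_subset.
split; first by move=> j t.
split; first by move=> i j k ij jk t /ij /jk.
split; last by move=> j k; exists (subsetU j k); split=> t /=; auto.
move=> [T1 s1] [T2 s2] le12 le21; apply: sval_inj => /=.
by apply: funext => t; apply: propext; split; [exact: le12 | exact: le21].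
Qed.

End SmallSubsets.

Section Bonds.
Variables (R : pzRingType) (K : Type) (M N : lmodType R) (hK : infinite_regular K).
Variables (beta : M -> N) (hbeta : lin beta).
Local Notation carrier := (@layer_carrier R K M N).
Local Notation layer := (@layer R K M N hK).

Definition indicator (D : K -> Prop) (v : N) : K -> N :=
  fun k => if pselect (D k) then v else 0.

Lemma indicator0 D : indicator D 0 = 0.
Proof. by apply: funext => k; rewrite /indicator; case: pselect. Qed.

Definition bond_val (T T' : K -> Prop) (x : layer T') : carrier :=
  ((val x).1, (val x).2 + indicator (fun k => T' k /\ ~ T k) (beta (val x).1)).

(* insubd falls back to 0 outside the layer; bondE shows that the value does
   lie in the layer when T is inside the small set T'. *)
Definition bond (T T' : K -> Prop) (x : layer T') : layer T := insubd 0 (bond_val T x).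

Section Bond.
Variables (T T' : K -> Prop).
Hypotheses (sub : forall k, T k -> T' k) (T'_small : small K T').

Lemma bondE (x : layer T') : val (bond T x) = bond_val T x.
Proof.
rewrite /bond insubdK //; apply/(layer_predP (hK := hK)).
have [x_off x_small] := layer_off x.
split=> [k Tk|].
  rewrite /= add_fun_apply x_off ?add0r; last exact: sub.
  by rewrite /indicator; case: pselect => // -[_ []].
apply: small_sub (smallU hK x_small T'_small) => k /=.
case: (pselect ((val x).2 k = 0)) => [x0|]; last by left.
rewrite add_fun_apply x0 add0r /indicator.
by case: pselect => [[T'k _] _|]; [right | ].
Qed.

Lemma bond_lin : lin (@bond T T').
Proof.
move=> a u v; apply: val_inj.
rewrite GRing.valD GRing.valZ !bondE /bond_val GRing.valD GRing.valZ.
apply: injective_projections => //=; apply: funext => k.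
rewrite !add_fun_apply !scale_fun_apply !add_fun_apply /indicator hbeta.
by case: pselect => ? /=; rewrite ?addr0 // scalerDr addrACA.
Qed.

Lemma bond_inj : injective (@bond T T').
Proof.
move=> u v /(congr1 val); rewrite !bondE /bond_val => -[fst_eq].
rewrite fst_eq => /addIr snd_eq.
by apply: val_inj; rewrite [val u]surjective_pairing [val v]surjective_pairing fst_eq snd_eq.
Qed.

End Bond.

Lemma bond_id (T : K -> Prop) (x : layer T) : small K T -> bond T x = x.
Proof.
move=> T_small; apply: val_inj; rewrite bondE // /bond_val.
rewrite (_ : indicator _ _ = 0) ?addr0; first by case: (val x).
by apply: funext => k; rewrite /indicator; case: pselect => // -[].
Qed.

(* Bonding maps compose: 1_(T'' \ T') + 1_(T' \ T) = 1_(T'' \ T). *)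
Lemma bond_comp (T T' T'' : K -> Prop) (x : layer T'') :
  (forall k, T k -> T' k) -> (forall k, T' k -> T'' k) -> small K T' -> small K T'' ->
  bond T (bond T' x) = bond T x.
Proof.
move=> sub1 sub2 T'_small T''_small; apply: val_inj.
have sub12 k : T k -> T'' k by move/sub1/sub2.
rewrite (bondE sub1 T'_small) /bond_val (bondE sub2 T''_small) (bondE sub12 T''_small).
congr pair; apply: funext => k; rewrite /= !add_fun_apply /indicator.
have := sub1 k; have := sub2 k.
by case: pselect => ? /=; case: pselect => ? /=; case: pselect => ? /=;
  rewrite ?addr0 //; tauto.
Qed.

Variables (A : lmodType R) (alpha : A -> M).

Definition embed (T : K -> Prop) (a : A) : layer T := insubd 0 ((alpha a, 0) : carrier).

Lemma embedE T a : val (embed T a) = (alpha a, 0).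
Proof.
rewrite /embed insubdK //; apply/(layer_predP (hK := hK)); split=> //.
by apply: small_sub (small0 hK K) => k /=; apply.
Qed.

End Bonds.

Section RestrictedProduct.
Variables (R : pzRingType) (K : Type) (M N : lmodType R) (hK : infinite_regular K).
Variable T : K -> Prop.
Local Notation layer := (@layer R K M N hK T).

(* The layer over T is the kappa-restricted product of M (at index None)
   and of one copy of N for each k outside T. *)
Definition coord_index := option {k : K | ~ T k}.

Definition coord_module (i : coord_index) : lmodType R := if i is Some _ then N else M.

Definition coords (x : layer) : forall i, coord_module i :=
  fun i => match i as i0 return coord_module i0 with
           | None => (val x).1
           | Some k => (val x).2 (sval k) end.

Lemma coords_inj : injective coords.
Proof.
move=> u v uv; apply: val_inj.
rewrite [val u]surjective_pairing [val v]surjective_pairing.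
congr pair; first exact: (congr1 (fun f => f None) uv).
apply: funext => k; case: (pselect (T k)) => [Tk|nTk].
  by rewrite (layer_off u).1 // (layer_off v).1.
exact: (congr1 (fun f => f (Some (exist _ k nTk))) uv).
Qed.

Lemma coords_small (x : layer) : small K (fun i => coords x i <> 0).
Proof.
have [nat_to_K _] := hK.1.
have [_ x_small] := layer_off x.
apply: (small_inj_on (h := omap sval)
         (S2 := fun o => if o is Some k then (val x).2 k <> 0 else True)).
- by move=> [[k nTk]|].
- by move=> [[a ha]|] [[b hb]|] //= _ _ [ab]; congr Some; apply: sval_inj.
- exact: small_option (nat_to_K 0%N) _ x_small.
Qed.

Lemma coords_onto (y : forall i, coord_module i) :
  small K (fun i => y i <> 0) -> exists x, coords x = y.
Proof.
move=> y_small.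
pose f k : N := if pselect (T k) is right nTk then y (Some (exist _ k nTk)) else 0.
pose index k : coord_index := if pselect (T k) is right nTk then Some (exist _ k nTk) else None.
have f_off : supported_off T ((y None, f) : layer_carrier K M N).
  split=> [k Tk|]; first by rewrite /f /=; case: (pselect (T k)).
  apply: (small_inj_on (h := index) (S1 := fun k => f k <> 0)) y_small => [k|a b].
    by rewrite /f /index; case: pselect.
  by rewrite /f /index; case: pselect => ?; case: pselect => ? // _ _ [].
exists (insubd 0 ((y None, f) : layer_carrier K M N)).
have f_mem : (y None, f) \in layer_pred hK T by apply/layer_predP.
apply: functional_extensionality_dep => -[[k nTk]|]; rewrite /coords insubdK //=.
by rewrite /f; case: pselect => // nTk'; rewrite (Prop_irrelevance nTk' nTk).
Qed.

Lemma layer_restricted_product : is_restricted_product K coords.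
Proof.
split; [by move=> [k|] a u v | split; first exact: coords_inj].
move=> y; split; first by case=> x <-; apply: coords_small.
exact: coords_onto.
Qed.

End RestrictedProduct.

Lemma layer_in_class (R : pzRingType) (C : modclass R) (K : Type) (hK : infinite_regular K)
  (M N : lmodType R) (T : K -> Prop) :
  closed_restricted_products C K -> C M -> C N -> C (layer M N hK T).
Proof.
move=> hprod hM hN; apply: hprod (layer_restricted_product M N hK T).
by move=> [k|]; [exact: hN | exact: hM].
Qed.

Section InverseLimit.
Variables (R : pzRingType) (K : Type) (hK : infinite_regular K).
Variables (A M N : lmodType R) (alpha : A -> M) (beta : M -> N).
Hypotheses (halpha : lin alpha) (hbeta : lin beta) (hinj : injective alpha).
Hypothesis hexact : forall m : M, (exists a, alpha a = m) <-> beta m = 0.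
Local Notation J := (small_subset K).

Definition system_module (j : J) : lmodType R := layer M N hK (sval j).

Definition system_bond (j k : J) (_ : subset_le j k) : system_module k -> system_module j :=
  @bond R K M N hK beta (sval j) (sval k).

Definition limit_map (a : A) : forall j, system_module j := fun j => embed N hK alpha (sval j) a.

Lemma system_inverse : inverse_system system_bond.
Proof.
split; first by move=> j k jk; apply: bond_lin => //; exact: svalP.
split; first by move=> j jj x; apply: bond_id; exact: svalP.
by move=> i j k ij jk ik x; apply: bond_comp => //; exact: svalP.
Qed.

Lemma system_bonds_inj (j k : J) (jk : subset_le j k) : injective (system_bond jk).
Proof. by apply: bond_inj => //; exact: svalP. Qed.

Lemma compatible_val (x : forall j, system_module j) (j k : J) (jk : subset_le j k) :
  system_bond jk (x k) = x j -> val (x j) = bond_val beta (sval j) (x k).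
Proof. by move=> <-; rewrite bondE //; exact: svalP. Qed.

(* Since beta kills the image of alpha, A maps to compatible families. *)
Lemma limit_map_compatible (a : A) (j k : J) (jk : subset_le j k) :
  system_bond jk (limit_map a k) = limit_map a j.
Proof.
apply: val_inj; rewrite bondE //; last exact: svalP.
have beta_alpha : beta (alpha a) = 0 by apply/hexact; exists a.
by rewrite /bond_val !embedE /= beta_alpha indicator0 addr0.
Qed.

Section CompatibleFamily.
Variable x : forall j, system_module j.
Hypothesis x_compat : forall j k (jk : subset_le j k), system_bond jk (x k) = x j.
Local Notation x0 := (x (empty_subset hK)).

Lemma compatible_fst (j : J) : (val (x j)).1 = (val x0).1.
Proof. by rewrite (compatible_val (x_compat (empty_subset_le j))). Qed.

(* If beta m were nonzero, the N-component of x0 would be nonzero at every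
   k, namely beta m, read off through the layer over {k}; but it is small. *)
Lemma compatible_kernel : beta (val x0).1 = 0.
Proof.
apply: contrapT => beta_nz.
have [_ x0_small] := layer_off x0.
apply: (full_not_small _ x0_small) => k.
rewrite (compatible_val (x_compat (empty_subset_le (singleton_subset hK k)))).
rewrite /bond_val compatible_fst /= add_fun_apply (layer_off (x _)).1 //= add0r.
by rewrite /indicator; case: pselect => //= -[]; split.
Qed.

(* The N-components vanish: at k outside j, compare with the layer over j + {k}. *)
Lemma compatible_snd (j : J) : (val (x j)).2 = 0.
Proof.
apply: funext => k; case: (pselect (sval j k)) => [jk|njk].
  by rewrite (layer_off (x j)).1.
pose j' := subsetU hK j (singleton_subset hK k).
have le_jj' : subset_le j j' by move=> t; left.
rewrite (compatible_val (x_compat le_jj')) /= add_fun_apply.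
by rewrite (layer_off (x j')).1 /= ?compatible_fst ?compatible_kernel ?indicator0 ?addr0; last by right.
Qed.

Lemma compatible_from_A : exists a, limit_map a = x.
Proof.
have [a alpha_a] := (hexact (val x0).1).2 compatible_kernel.
exists a; apply: functional_extensionality_dep => j; apply: val_inj.
by rewrite embedE [val (x j)]surjective_pairing compatible_fst compatible_snd alpha_a.
Qed.

End CompatibleFamily.

Lemma limit_is_inverse_limit : is_inverse_limit system_bond limit_map.
Proof.
split; [|split].
- move=> j a u v; apply: val_inj.
  rewrite GRing.valD GRing.valZ !embedE halpha.
  by apply: injective_projections => //=; rewrite scaler0 addr0.
- move=> a b /(congr1 (fun f => val (f (empty_subset hK)))).
  by rewrite !embedE => -[/hinj].
- move=> x; split; first by case=> a <-; exact: limit_map_compatible.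
  exact: compatible_from_A.
Qed.

End InverseLimit.

Unset Implicit Arguments.

Theorem corollary8 (R : pzRingType) (C : modclass R) (K : Type)
  (hK : infinite_regular K)
  (hiso : iso_closed C) (hprod : closed_restricted_products C K)
  (A M N : lmodType R) (alpha : A -> M) (beta : M -> N)
  (halpha : lin alpha) (hbeta : lin beta)
  (hinj : injective alpha)
  (hexact : forall m : M, (exists a, alpha a = m) <-> beta m = 0)
  (hM : C M) (hN : C N) :
  exists (J : Type) (le : J -> J -> Prop) (Ns : J -> lmodType R)
         (phi : forall j k, le j k -> Ns k -> Ns j) (g : A -> forall j, Ns j),
    directed_poset le /\
    (forall j, C (Ns j)) /\
    inverse_system phi /\
    (forall j k (h : le j k), injective (phi j k h)) /\
    is_inverse_limit phi g.
Proof.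
exists (small_subset K), (@subset_le K), (system_module hK M N),
  (@system_bond _ _ hK M N beta), (limit_map hK N alpha).
split; first exact: small_subsets_directed.
split; first by move=> j; exact: layer_in_class.
split; first exact: system_inverse.
split; first exact: system_bonds_inj.
exact: limit_is_inverse_limit.
Qed.
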